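(* Let $(X,d)$ be a metric space and $x\in X$ such that $\limsup_{r\to0}n_{\lambda r}(\overline{B}_X(x,r))<\infty$ for all $\lambda>0$. Then $$\overline{\delta}_X(x)=\limsup_{r\to0}\sup_{T\in\mathcal{T}_xX}\frac{\log n_r(\overline{B}_T(x,1))}{\log 1/r},\qquad \underline{\delta}_X(x)=\liminf_{r\to0}\inf_{T\in\mathcal{T}_xX}\frac{\log n_r(\overline{B}_T(x,1))}{\log 1/r}.$$
   Context: $\overline{B}_X(x,r)=\{y:d(x,y)\le r\}$; $n_r(A)$ is the minimum number of open balls of radius $r$ needed to cover $A$. The lower and upper tangential dimensions of $X$ at $x$ are $\underline{\delta}_X(x)=\liminf_{\lambda\to0}\liminf_{r\to0}\frac{\log n(\lambda r,\overline{B}_X(x,r))}{\log1/\lambda}$ and $\overline{\delta}_X(x)=\limsup_{\lambda\to0}\limsup_{r\to0}\frac{\log n(\lambda r,\overline{B}_X(x,r))}{\log1/\lambda}$. A tangent set of $X$ at $x$ is any limit point as $t\to\infty$ of $(X,x,td)$ (metric rescaled by $t$, base point $x$) in the pointed Gromov–Hausdorff topology; $\mathcal{T}_xX$ is the set of tangent sets, and for $T\in\mathcal{T}_xX$, $\overline{B}_T(x,1)$ is the closed ball of radius 1 about the base point of $T$ (still denoted $x$). *)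

From HB Require Import structures.
From mathcomp Require Import all_boot all_order all_algebra.
From mathcomp Require Import all_classical all_reals all_analysis.
Set Implicit Arguments. Unset Strict Implicit. Unset Printing Implicit Defensive.
Import Order.TTheory GRing.Theory Num.Theory.
Local Open Scope classical_set_scope.
Local Open Scope ring_scope.

Record metricSpace (R : realType) := MetricSpace {
  mcarrier :> Type;
  md : mcarrier -> mcarrier -> R;
  md_eq0 : forall a b, md a b = 0 <-> a = b;
  md_sym : forall a b, md a b = md b a;
  md_tri : forall a b c, md a c <= md a b + md b c }.

Definition cball {R : realType} {T : Type} (d : T -> T -> R) (x : T) (r : R)
  : set T := [set y | d x y <= r].

Definition oball {R : realType} {T : Type} (d : T -> T -> R) (x : T) (r : R)
  : set T := [set y | d x y < r].

(* n_r(A): minimum number of open balls of radius r (centers anywhere in the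
   ambient space) needed to cover A; +oo if no finite cover exists. *)
Definition ncov {R : realType} {T : Type} (d : T -> T -> R) (r : R) (A : set T)
  : \bar R :=
  ereal_inf [set (n%:R)%:E | n in
    [set n : nat | exists c : nat -> T,
       A `<=` [set y | exists2 i : nat, (i < n)%N & d (c i) y < r]]].

Definition elog {R : realType} (e : \bar R) : \bar R :=
  match e with
  | EFin v => (ln v)%:E
  | +oo%E => +oo%E
  | -oo%E => -oo%E
  end.

Definition limsup0 {R : realType} (f : R -> \bar R) : \bar R :=
  ereal_inf [set ereal_sup (f @` [set r | 0 < r < δ]) | δ in [set δ : R | 0 < δ]].
Definition liminf0 {R : realType} (f : R -> \bar R) : \bar R :=
  ereal_sup [set ereal_inf (f @` [set r | 0 < r < δ]) | δ in [set δ : R | 0 < δ]].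

Definition logratio {R : realType} (n : \bar R) (l : R) : \bar R :=
  (elog n * ((ln (l^-1))^-1)%:E)%E.

Definition upper_tan_dim {R : realType} (X : metricSpace R) (x : X) : \bar R :=
  limsup0 (fun l => limsup0 (fun r =>
    logratio (ncov (@md R X) (l * r) (cball (@md R X) x r)) l)).
Definition lower_tan_dim {R : realType} (X : metricSpace R) (x : X) : \bar R :=
  liminf0 (fun l => liminf0 (fun r =>
    logratio (ncov (@md R X) (l * r) (cball (@md R X) x r)) l)).

(* Pointed Gromov-Hausdorff convergence (Burago-Burago-Ivanov, Def. 8.1.1)
   of the rescaled pointed spaces (X, x, t_n d) to (T, p): for every r, eps > 0,
   for all large n there is a map f from the ball B_{t_n d}(x, r) to T with
   f x = p, distortion < eps, and whose image has eps-neighbourhood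
   containing B_T(p, r - eps). *)
Definition pGH_rescaled_conv {R : realType} (X : metricSpace R) (x : X)
  (t : nat -> R) (T : metricSpace R) (p : T) : Prop :=
  forall r eps : R, 0 < r -> 0 < eps ->
  exists n0 : nat, forall n : nat, (n0 <= n)%N ->
  exists f : X -> T,
    [/\ f x = p,
        (forall a b, t n * md x a < r -> t n * md x b < r ->
            `| md (f a) (f b) - t n * md a b | < eps)
      & (forall y, md p y < r - eps ->
            exists2 a, t n * md x a < r & md (f a) y < eps)].

Definition is_tangent {R : realType} (X : metricSpace R) (x : X)
  (T : metricSpace R) (p : T) : Prop :=
  exists t : nat -> R, (forall n, 0 < t n) /\
    (forall M : R, exists N : nat, forall n, (N <= n)%N -> M < t n) /\
    pGH_rescaled_conv x t p.

Definition tan_logratio {R : realType} (Tp : {T : metricSpace R & T}) (r : R)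
  : \bar R :=
  logratio (ncov (@md R (projT1 Tp)) r (cball (@md R (projT1 Tp)) (projT2 Tp) 1)) r.

Definition tangents {R : realType} (X : metricSpace R) (x : X)
  : set {T : metricSpace R & T} :=
  [set Tp | is_tangent x (projT2 Tp)].

(* Write g_l(r) = log n_{lr}(B_X(x,r)) / log(1/l), h_T(r) = log n_r(B_T(x,1)) / log(1/r)
   and Q(r) = log(2/r) / log(1/r).  For 0 < r < 1 we show
     sup_T h_T(r) <= Q(r) limsup g_{r/2},      limsup g_r <= Q(r) sup_T h_T(r/2),
   and the same with inf and liminf; as Q(r) -> 1 when r -> 0, taking the limsup
   (resp. liminf) in r gives the two equalities.
   Both kinds of inequalities transfer covers: a tangent T is a pointed
   Gromov-Hausdorff limit of rescalings (X, x, t_n d), so for large n covers of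
   B_X(x, 1/t_n) at scale l/t_n and covers of B_T(x, 1) at scale about l correspond,
   the small loss of scale being absorbed by halving l.  Bounding limsup g by
   sup_T h_T, and inf_T h_T by liminf g, also needs a tangent along any given
   sequence of scales s_k -> 0: the finiteness hypothesis makes the rescaled balls
   uniformly totally bounded, so along a subsequence (X, x, d/s_k) converges, namely
   to its ultralimit along a nonprincipal ultrafilter. *)

From HB Require Import structures.
From mathcomp Require Import all_boot all_order all_algebra.
From mathcomp Require Import all_classical all_reals all_analysis.
From mathcomp Require Import lra.
Set Implicit Arguments. Unset Strict Implicit. Unset Printing Implicit Defensive.
Import Order.TTheory GRing.Theory Num.Theory numFieldNormedType.Exports.
Local Open Scope classical_set_scope.
Local Open Scope ring_scope.

Section Basics.
Variable R : realType.

Lemma mdxx (X : metricSpace R) (a : X) : md a a = 0.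
Proof. exact/md_eq0. Qed.

Lemma md_ge0 (X : metricSpace R) (a b : X) : 0 <= md a b.
Proof. by have := md_tri a b a; rewrite mdxx (md_sym b a); lra. Qed.

Lemma scaled_md_tri (X : metricSpace R) (s : R) (a b c : X) :
  0 <= s -> s * md a c <= s * md a b + s * md b c.
Proof. by move=> s0; rewrite -mulrDr ler_wpM2l // md_tri. Qed.

Lemma scaled_md_ge0 (X : metricSpace R) (s : R) (a b : X) :
  0 <= s -> 0 <= s * md a b.
Proof. by move=> s0; rewrite mulr_ge0 // md_ge0. Qed.

Definition covers (T : Type) (d : T -> T -> R) (r : R) (A : set T) (n : nat)
  (c : nat -> T) := A `<=` [set y | exists2 i : nat, (i < n)%N & d (c i) y < r].

Lemma cover_of_ncov_lt (T : Type) (d : T -> T -> R) r A (n : nat) :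
  (ncov d r A < n.+1%:R%:E)%E -> exists c, covers d r A n c.
Proof.
move=> /ereal_inf_lt [_ [m [c Ac] <-]]; rewrite lte_fin ltr_nat ltnS => mn.
by exists c => y /Ac [i im ciy]; exists i => //; apply: leq_trans im mn.
Qed.

Lemma ncov_ge1 (T : Type) (d : T -> T -> R) r (A : set T) a :
  A a -> (1 <= ncov d r A)%E.
Proof.
move=> Aa; apply: le_ereal_inf_tmp => _ [n [c /(_ a Aa) [i ilt _]] <-].
by rewrite lee_fin (ler_nat _ 1) (leq_ltn_trans _ ilt).
Qed.

Lemma ncov_cball_ge1 (X : metricSpace R) (x : X) (r rho : R) : 0 <= r ->
  (1 <= ncov (@md R X) rho (cball (@md R X) x r))%E.
Proof. by move=> r0; apply: (ncov_ge1 _ _ (a := x)); rewrite /cball /= mdxx. Qed.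

Lemma ncov_le_of_covers (T1 T2 : Type) (d1 : T1 -> T1 -> R) (d2 : T2 -> T2 -> R)
    r1 r2 (A1 : set T1) (A2 : set T2) :
  (forall n c, covers d1 r1 A1 n c -> exists c', covers d2 r2 A2 n c') ->
  (ncov d2 r2 A2 <= ncov d1 r1 A1)%E.
Proof.
move=> h; apply: ereal_inf_le_tmp => _ [n [c /h [c' A2c']] <-].
by exists n => //; exists c'.
Qed.

Lemma ncov_radius_le (T : Type) (d : T -> T -> R) r1 r2 A :
  r1 <= r2 -> (ncov d r2 A <= ncov d r1 A)%E.
Proof.
move=> r12; apply: ncov_le_of_covers => n c Ac; exists c => y /Ac [i ilt ciy].
by exists i => //; apply: lt_le_trans r12.
Qed.

(* Cover centres may lie outside [A]; moving each useful centre into [A]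
   doubles the radius. *)
Lemma covers_inner_net (X : metricSpace R) (A : set X) (a0 : X) r n c :
  A a0 -> covers (@md R X) r A n c ->
  exists z : nat -> X, [/\ forall i, A (z i), z 0%N = a0 &
    forall a, A a -> exists2 i, (i < n.+1)%N & md a (z i) < 2 * r].
Proof.
move=> Aa0 Ac.
have /choice [w wP] : forall i, exists wi : X, A wi /\
    ((exists2 a, A a & md (c i) a < r) -> md (c i) wi < r).
  move=> i; have [[a Aa cia]|nA] := pselect (exists2 a, A a & md (c i) a < r).
    by exists a.
  by exists a0; split=> // /nA.
exists (fun i => if i is i'.+1 then w i' else a0); split => //.
  by case=> [|i] //; case: (wP i).
move=> a /[dup] Aa /Ac [i ilt cia]; exists i.+1 => //.
have [_ /(_ (ex_intro2 _ _ a Aa cia)) ciw] := wP i.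
by have := md_tri a (c i) (w i); rewrite (md_sym a (c i)); lra.
Qed.

Lemma elog_le (a b : \bar R) : (1 <= a)%E -> (a <= b)%E -> (elog a <= elog b)%E.
Proof.
case: a => [a| |] //; case: b => [b| |] //=; rewrite ?lee_fin ?leey // => a1 ab.
by rewrite ler_ln ?posrE //; lra.
Qed.

Lemma elog_ge0 (a : \bar R) : (1 <= a)%E -> (0 <= elog a)%E.
Proof. by case: a => [a| |] //= a1; rewrite lee_fin ln_ge0. Qed.

Lemma ereal_lt_nat (e : \bar R) : (e < +oo)%E -> exists n : nat, (e < n.+1%:R%:E)%E.
Proof.
case: e => [e| |] // _; last by exists 0%N; rewrite ltNye.
have [N _ NP] := nbhs_infty_gtr e; exists N; rewrite lte_fin.
by apply: NP => /=; exact: leqnSn.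
Qed.

Lemma filter_forall_lt {T : Type} (F : set_system T) {FF : Filter F}
    (P : nat -> set T) n :
  (forall i, (i < n)%N -> F (P i)) -> F [set k | forall i, (i < n)%N -> P i k].
Proof.
move=> FP; have /filter_forall : forall i : 'I_n, F (P i) by move=> i; exact: FP.
by apply: filterS => k Pk i ilt; exact: (Pk (Ordinal ilt)).
Qed.

Lemma ultra_pigeonhole {T : Type} (U : set_system T) {UU : UltraFilter U}
    (P : nat -> set T) n :
  U [set k | exists2 i, (i < n)%N & P i k] -> exists2 i, (i < n)%N & U (P i).
Proof.
move=> UP; apply: contrapT => nP.
have UnP : U [set k | forall i, (i < n)%N -> ~ P i k].
  apply: filter_forall_lt => i ilt.
  by have [UPi|//] := in_ultra_setVsetC (P i) UU; case: nP; exists i.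
by have [k [[i ilt Pik] /(_ i ilt)]] := filter_ex (filterI UP UnP).
Qed.

Lemma ultra_bounded_cvg {T : Type} (U : set_system T) {UU : UltraFilter U}
    (u : T -> R) (M : R) :
  (forall k, `|u k| <= M) -> cvg (u @ U).
Proof.
move=> uM; have [l [_ ul]] : `[- M, M] `&` cluster (u @ U) !=set0.
  apply: segment_compact; apply: (@filterE _ U) => k /=.
  by rewrite in_itv /= -ler_norml.
apply/cvg_ex; exists l; apply/cvgrPdistC_lt => e e0.
have [//|Ufar] := in_ultra_setVsetC [set k | `|u k - l| < e] UU.
have [y [/= yfar]] := ul [set y | ~ `|y - l| < e] _ Ufar (nbhsx_ballx l e e0).
by rewrite -ball_normE /ball_ /= distrC.
Qed.

End Basics.

Section RescaledApprox.
Variable R : realType.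

(* [pGH_rescaled_conv x t p] says exactly: for all [r, eps > 0], eventually
   [rescaled_approx x (t n) p r eps]. *)
Definition rescaled_approx (X : metricSpace R) (x : X) (s : R)
    (T : metricSpace R) (p : T) (r eps : R) : Prop :=
  exists f : X -> T, [/\ f x = p,
    (forall a b, s * md x a < r -> s * md x b < r ->
       `|md (f a) (f b) - s * md a b| < eps)
  & (forall y, md p y < r - eps -> exists2 a, s * md x a < r & md (f a) y < eps)].

Lemma rescaled_approx_le (X : metricSpace R) (x : X) s (T : metricSpace R) (p : T)
    r eps r' eps' :
  0 < r -> 0 < eps' -> r <= r' -> 2 * eps' <= eps ->
  rescaled_approx x s p r' eps' -> rescaled_approx x s p r eps.
Proof.
move=> r0 e'0 rr' ee' [f [fx fdist fdense]]; exists f; split => //.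
  move=> a b xa xb.
  by have := fdist a b (lt_le_trans xa rr') (lt_le_trans xb rr'); lra.
move=> y py; have [a xa fay] := fdense y ltac:(lra).
have xx : s * md x x < r' by rewrite mdxx mulr0; lra.
have /ltr_normlP [xa' _] := fdist x a xx xa; rewrite fx in xa'.
have := md_tri p y (f a); rewrite (md_sym y (f a)) => pfa.
by exists a => //; lra.
Qed.

Lemma pGH_of_nat_approx (X : metricSpace R) (x : X) (t : nat -> R)
    (T : metricSpace R) (p : T) :
  (forall m : nat, exists n0 : nat, forall n, (n0 <= n)%N ->
     rescaled_approx x (t n) p m.+1%:R m.+1%:R^-1) ->
  pGH_rescaled_conv x t p.
Proof.
move=> tapprox r eps r0 eps0.
have [m _ mP] := nbhs_infty_ger (Num.max r (2 / eps)).
have /andP [rm em] : (r <= m.+1%:R) && (2 / eps <= m.+1%:R).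
  by rewrite -ge_max (le_trans (mP m (leqnn m))) // ler_nat.
have [n0 n0P] := tapprox m; exists n0 => n /n0P.
apply: rescaled_approx_le => //.
by rewrite ler_pdivrMr ?ltr0n // mulrC -ler_pdivrMr.
Qed.

End RescaledApprox.

Section Ultralimit.
Variables (R : realType) (X : metricSpace R) (x : X) (t : nat -> R).
Hypothesis tpos : forall k, 0 < t k.
Variable U : set_system nat.
Context {UU : UltraFilter U}.

Local Notation d := (@md R X).

(* The ultralimit along [U] of the rescaled pointed spaces [(X, x, t k * d)]. *)
Definition bounded_seq :=
  {a : nat -> X | exists M : R, forall k, t k * d x (a k) <= M}.

Definition sdist (a b : bounded_seq) k := t k * d (sval a k) (sval b k).

Lemma sdist_ge0 a b k : 0 <= sdist a b k.
Proof. exact/scaled_md_ge0/ltW. Qed.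

Lemma sdist_sym a b : sdist a b = sdist b a.
Proof. by apply: funext => k; rewrite /sdist md_sym. Qed.

Lemma sdist_cvg a b : cvg (sdist a b @ U).
Proof.
case: a => a [Ma xa]; case: b => b [Mb xb].
apply: (ultra_bounded_cvg (M := Ma + Mb)) => k.
rewrite ger0_norm ?sdist_ge0 //; apply: le_trans (scaled_md_tri _ x _ (ltW (tpos k))) _.
by rewrite md_sym; apply: lerD.
Qed.

Definition udist a b := lim (sdist a b @ U).

Lemma udist_near a b (e : R) : 0 < e -> U [set k | `|sdist a b k - udist a b| < e].
Proof. by apply: cvgr_distC_lt; exact: sdist_cvg. Qed.

Lemma udist_le a b (c : R) : U [set k | sdist a b k <= c] -> udist a b <= c.
Proof. by move=> h; apply: limr_le h; exact: sdist_cvg. Qed.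

Lemma udist_ge a b (c : R) : U [set k | c <= sdist a b k] -> c <= udist a b.
Proof. by move=> h; apply: limr_ge h; exact: sdist_cvg. Qed.

Lemma udist_ge0 a b : 0 <= udist a b.
Proof. by apply: udist_ge; apply: filterE => k; exact: sdist_ge0. Qed.

Lemma udistxx a : udist a a = 0.
Proof.
rewrite /udist (_ : sdist a a = fun=> 0) ?lim_cst //.
by apply: funext => k; rewrite /sdist mdxx mulr0.
Qed.

Lemma udist_sym a b : udist a b = udist b a.
Proof. by rewrite /udist sdist_sym. Qed.

Lemma udist_tri a b c : udist a c <= udist a b + udist b c.
Proof.
rewrite /udist -limD; [|exact: sdist_cvg..].
apply: (@ler_lim nat U _ R); first exact: sdist_cvg.
  by apply: is_cvgD; exact: sdist_cvg.
by apply: filterE => k; apply: scaled_md_tri; exact: ltW.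
Qed.

Definition uclass (a : bounded_seq) : bounded_seq -> Prop := fun b => udist a b = 0.

Definition upoint := {S : bounded_seq -> Prop | exists a, S = uclass a}.

Definition urep (S : upoint) : bounded_seq := projT1 (cid (svalP S)).

Lemma urepP S : sval S = uclass (urep S).
Proof. exact: projT2 (cid (svalP S)). Qed.

Lemma upoint_eq (S1 S2 : upoint) : sval S1 = sval S2 -> S1 = S2.
Proof. by case: S1 S2 => [A1 p1] [A2 p2] /= A12; exact: eq_exist. Qed.

Lemma udist_congr a a' b b' :
  udist a a' = 0 -> udist b b' = 0 -> udist a b = udist a' b'.
Proof.
move=> aa' bb'; apply/le_anti/andP; split.
  apply: le_trans (udist_tri a a' b) _; rewrite aa' add0r.
  by apply: le_trans (udist_tri a' b' b) _; rewrite (udist_sym b' b) bb' addr0.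
apply: le_trans (udist_tri a' a b') _; rewrite (udist_sym a' a) aa' add0r.
by apply: le_trans (udist_tri a b b') _; rewrite bb' addr0.
Qed.

Lemma uclass_eq a b : uclass a = uclass b <-> udist a b = 0.
Proof.
split=> [ab|ab].
  by have : uclass b b; [exact: udistxx|rewrite -ab].
by apply: funext => c; rewrite /uclass /= (udist_congr ab (udistxx c)).
Qed.

Definition umd (S1 S2 : upoint) := udist (urep S1) (urep S2).

Lemma umd_eq0 S1 S2 : umd S1 S2 = 0 <-> S1 = S2.
Proof.
split=> [S12|->]; last exact: udistxx.
by apply: upoint_eq; rewrite !urepP; apply/uclass_eq.
Qed.

Lemma umd_sym S1 S2 : umd S1 S2 = umd S2 S1.
Proof. exact: udist_sym. Qed.

Lemma umd_tri S1 S2 S3 : umd S1 S3 <= umd S1 S2 + umd S2 S3.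
Proof. exact: udist_tri. Qed.

Definition ultralimit : metricSpace R :=
  @MetricSpace R upoint umd umd_eq0 umd_sym umd_tri.

Definition upt (a : bounded_seq) : ultralimit :=
  exist _ (uclass a) (ex_intro _ a erefl).

Lemma udist_urep a : udist a (urep (upt a)) = 0.
Proof. by apply/uclass_eq; rewrite -urepP. Qed.

Lemma md_upt_l a (S : ultralimit) : md (upt a) S = udist a (urep S).
Proof.
by apply: udist_congr; [rewrite udist_sym; exact: udist_urep|exact: udistxx].
Qed.

Lemma md_upt a b : md (upt a) (upt b) = udist a b.
Proof.
rewrite md_upt_l; apply: udist_congr; first exact: udistxx.
by rewrite udist_sym; exact: udist_urep.
Qed.

Lemma const_seq_bounded : exists M : R, forall k, t k * d x ((fun=> x) k) <= M.
Proof. by exists 0 => k; rewrite mdxx mulr0. Qed.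

Definition xseq : bounded_seq := exist _ _ const_seq_bounded.

Definition ubase : ultralimit := upt xseq.

Hypothesis U_tail : forall N, U [set k | (N <= k)%N].
Hypothesis small_balls_cover : forall R0 eta : R, 0 < R0 -> 0 < eta ->
  exists N k0 : nat, forall k, (k0 <= k)%N ->
  exists c : nat -> X, covers d (eta / t k) (cball d x (R0 / t k)) N c.

Lemma rescaled_net (R0 eta : R) : 0 < R0 -> 0 < eta ->
  exists N k0 : nat, forall k, exists z : nat -> X,
  [/\ forall i, t k * d x (z i) < R0, z 0%N = x &
      (k0 <= k)%N -> forall a, t k * d x a < R0 ->
      exists2 i, (i < N.+1)%N & t k * d a (z i) < 2 * eta].
Proof.
move=> R00 eta0; have [N [k0 cov]] := small_balls_cover R00 eta0.
exists N, k0 => k; have tk := tpos k.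
have [kk0|nk] := leqP k0 k; last first.
  exists (fun=> x); split=> [i||]; by rewrite ?mdxx ?mulr0 // leqNgt nk.
pose A := [set a | t k * d x a < R0].
have [c Ac] : exists c, covers d (eta / t k) A N c.
  have [c cc] := cov k kk0; exists c => a Aa; apply: cc.
  by rewrite /cball /= ler_pdivlMr // mulrC; exact: ltW.
have Ax : A x by rewrite /A /= mdxx mulr0.
have [zk [zA z0 znet]] := covers_inner_net Ax Ac.
exists zk; split => // _ a /znet [i ilt dai]; exists i => //.
by rewrite mulrC -ltr_pdivlMr // -mulrA.
Qed.

(* [z k] is a finite net of the rescaled ball at time [k]; sending each point to
   the ultralimit of a [2 * eta]-close net sequence approximates for [U]-many [k]. *)
Section NetApprox.
Variables (R0 eta : R) (N k0 : nat) (z : nat -> nat -> X).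
Hypothesis eta0 : 0 < eta.
Hypothesis z_in : forall k i, t k * d x (z k i) < R0.
Hypothesis z0 : forall k, z k 0%N = x.
Hypothesis z_net : forall k, (k0 <= k)%N -> forall a, t k * d x a < R0 ->
  exists2 i, (i < N.+1)%N & t k * d a (z k i) < 2 * eta.

Definition net_seq i : bounded_seq :=
  exist _ (fun k => z k i) (ex_intro _ R0 (fun k => ltW (z_in k i))).

Lemma net_seq0 : upt (net_seq 0) = ubase.
Proof.
apply/md_eq0; rewrite md_upt; apply/eqP; rewrite eq_le udist_ge0 andbT.
by apply: udist_le; apply: filterE => k; rewrite /sdist /= z0 mdxx mulr0.
Qed.

Lemma net_dense (y : ultralimit) : md ubase y < R0 - eta ->
  exists2 i, (i < N.+1)%N & md (upt (net_seq i)) y <= 2 * eta.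
Proof.
rewrite md_upt_l => xy; set b := urep y in xy *.
have : U [set k | exists2 i, (i < N.+1)%N & t k * d (sval b k) (z k i) < 2 * eta].
  apply: filterS (filterI (U_tail k0) (udist_near xseq b eta0)).
  move=> k [kk0 /ltr_normlP [_]]; rewrite /sdist /= => xbk.
  by have [|i ilt bz] := z_net kk0 (a := sval b k); [lra|exists i].
move=> /ultra_pigeonhole [i ilt Ui]; exists i => //.
rewrite md_upt_l; apply: udist_le; apply: filterS Ui => k.
by rewrite /sdist /= md_sym; exact: ltW.
Qed.

Definition good_index k := (k0 <= k)%N /\
  forall i j, (i < N.+1)%N -> (j < N.+1)%N ->
  `|sdist (net_seq i) (net_seq j) k - udist (net_seq i) (net_seq j)| < eta.

Lemma good_index_near : U good_index.
Proof.
have Uall : U [set k | forall i, (i < N.+1)%N -> forall j, (j < N.+1)%N ->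
    `|sdist (net_seq i) (net_seq j) k - udist (net_seq i) (net_seq j)| < eta].
  apply: filter_forall_lt => i _; apply: filter_forall_lt => j _.
  exact: udist_near.
apply: filterS (filterI (U_tail k0) Uall) => k [kk0 kall].
by split=> // i j /kall; apply.
Qed.

Lemma net_index k : (k0 <= k)%N -> exists idx : X -> nat, idx x = 0%N /\
  forall a, (idx a < N.+1)%N /\
    (t k * d x a < R0 -> t k * d a (z k (idx a)) < 2 * eta).
Proof.
move=> kk0; have /choice [idx idxP] : forall a, exists i, [/\ a = x -> i = 0%N,
    (i < N.+1)%N & t k * d x a < R0 -> t k * d a (z k i) < 2 * eta].
  move=> a; have [->|ax] := pselect (a = x).
    by exists 0%N; split => // _; rewrite z0 mdxx mulr0 mulr_gt0.
  have [xa|xa] := pselect (t k * d x a < R0); last by exists 0%N.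
  by have [i ilt az] := z_net kk0 xa; exists i.
by exists idx; split=> [|a]; [case: (idxP x) => ->|case: (idxP a)].
Qed.

Lemma net_approx k : good_index k -> rescaled_approx x (t k) ubase R0 (5 * eta).
Proof.
move=> [kk0 kgood]; have [idx [idx0 idxP]] := net_index kk0.
have tk := ltW (tpos k).
exists (fun a => upt (net_seq (idx a))); split.
- by rewrite idx0 net_seq0.
- move=> a b xa xb; rewrite md_upt.
  have [ia /(_ xa) az] := idxP a; have [ib /(_ xb) bz] := idxP b.
  have /ltr_normlP := kgood _ _ ia ib; rewrite /sdist /= => -[g1 g2].
  have t1 := scaled_md_tri (z k (idx a)) a (z k (idx b)) tk.
  have t2 := scaled_md_tri a b (z k (idx b)) tk.
  have t3 := scaled_md_tri a (z k (idx a)) b tk.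
  have t4 := scaled_md_tri (z k (idx a)) (z k (idx b)) b tk.
  rewrite (md_sym (z k (idx a)) a) in t1; rewrite (md_sym (z k (idx b)) b) in t4.
  by apply/ltr_normlP; split; lra.
- move=> y xy; have /net_dense [i ilt iy] : md ubase y < R0 - eta.
    (* section hypotheses are invisible to [lra] *)
    by have := eta0; lra.
  exists (z k i); first exact: z_in.
  have [ii /(_ (z_in k i)) zi] := idxP (z k i).
  have := md_tri (upt (net_seq (idx (z k i)))) (upt (net_seq i)) y; rewrite md_upt.
  have /ltr_normlP [g _] := kgood _ _ ii ilt; rewrite /sdist /= md_sym in g.
  by lra.
Qed.

End NetApprox.

Lemma ultralimit_approx (r eps : R) : 0 < r -> 0 < eps ->
  U [set k | rescaled_approx x (t k) ubase r eps].
Proof.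
move=> r0 eps0; have eta0 : 0 < eps / 5 by rewrite divr_gt0.
have [N [k0 /choice [z zP]]] := rescaled_net r0 eta0.
have z_in k i : t k * d x (z k i) < r by case: (zP k).
have z0 k : z k 0%N = x by case: (zP k).
have z_net k : (k0 <= k)%N -> forall a, t k * d x a < r ->
    exists2 i, (i < N.+1)%N & t k * d a (z k i) < 2 * (eps / 5) by case: (zP k).
apply: filterS (good_index_near N k0 eta0 z_in) => k /(net_approx eta0 z0 z_net).
by rewrite mulrCA mulfV ?mulr1.
Qed.

Lemma tangent_subseq : exists phi : nat -> nat,
  (forall j, (j <= phi j)%N) /\ pGH_rescaled_conv x (fun j => t (phi j)) ubase.
Proof.
pose W m := [set k | rescaled_approx x (t k) ubase m.+1%:R m.+1%:R^-1].
have /choice [phi phiP] : forall j, exists k, (j <= k)%N /\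
    forall m, (m < j.+1)%N -> W m k.
  move=> j; have UW : U [set k | forall m, (m < j.+1)%N -> W m k].
    apply: filter_forall_lt => m _.
    by apply: ultralimit_approx; rewrite ?invr_gt0 ltr0n.
  by have [k [jk Wk]] := filter_ex (filterI (U_tail j) UW); exists k.
exists phi; split => [j|]; first by case: (phiP j).
apply: pGH_of_nat_approx => m; exists m => n mn.
by case: (phiP n) => _; apply; rewrite ltnS.
Qed.

End Ultralimit.

Section Tangents.
Variables (R : realType) (X : metricSpace R) (x : X).
Local Notation d := (@md R X).

Definition diverging (t : nat -> R) :=
  forall M : R, exists N : nat, forall n, (N <= n)%N -> M < t n.

Lemma tangent_of_subseq (t : nat -> R) (phi : nat -> nat) (T : metricSpace R) (p : T) :
  (forall k, 0 < t k) -> diverging t -> (forall j, (j <= phi j)%N) ->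
  pGH_rescaled_conv x (fun j => t (phi j)) p -> tangents x (existT _ T p).
Proof.
move=> tpos tdiv phi_ge conv; exists (fun j => t (phi j)); split=> //; split=> // M.
by have [N NP] := tdiv M; exists N => n Nn; apply: NP; apply: leq_trans Nn (phi_ge n).
Qed.

Lemma diverging_small (t : nat -> R) (c del : R) (n0 : nat) :
  (forall k, 0 < t k) -> diverging t -> 0 < c -> 0 < del ->
  exists2 n, (n0 <= n)%N & 0 < c / t n < del.
Proof.
move=> tpos tdiv c0 del0; have [N NP] := tdiv (c / del).
exists (maxn n0 N); first by rewrite leq_maxl.
rewrite divr_gt0 //= ltr_pdivrMr // mulrC -ltr_pdivrMr //.
by apply: NP; rewrite leq_maxr.
Qed.

Lemma diverging_natS : diverging (fun k => k.+1%:R : R).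
Proof.
move=> M; have [N _ NP] := nbhs_infty_gtr M; exists N => n /NP Mn.
by apply: lt_le_trans Mn _; rewrite ler_nat.
Qed.

Lemma diverging_div (c : R) (s : nat -> R) : 0 < c ->
  (forall k, 0 < s k < k.+1%:R^-1) -> diverging (fun k => c / s k).
Proof.
move=> c0 s_lt M; have [N NP] := diverging_natS (M / c); exists N => n /NP Mn.
have /andP [sn0 sn1] := s_lt n.
rewrite ltr_pdivrMr // mulrC in Mn; apply: lt_trans Mn _.
by rewrite ltr_pM2l // -[X in X < _]invrK ltf_pV2 ?posrE ?invr_gt0.
Qed.

Section CoveringHypothesis.
Hypothesis ncov_bounded : forall l : R, 0 < l ->
  (limsup0 (fun r => ncov d (l * r) (cball d x r)) < +oo)%E.

Lemma rescaled_balls_cover (t : nat -> R) : (forall k, 0 < t k) -> diverging t ->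
  forall R0 eta : R, 0 < R0 -> 0 < eta -> exists N k0 : nat, forall k, (k0 <= k)%N ->
  exists c : nat -> X, covers d (eta / t k) (cball d x (R0 / t k)) N c.
Proof.
move=> tpos tdiv R0 eta R00 eta0.
have /ncov_bounded : 0 < eta / R0 by rewrite divr_gt0.
move=> /ereal_inf_lt [_ [del del0 <-]] /ereal_lt_nat [N NP].
have [k0 k0P] := tdiv (R0 / del); exists N, k0 => k kk0; have tk := tpos k.
apply: cover_of_ncov_lt; apply: le_lt_trans NP.
have -> : eta / t k = eta / R0 * (R0 / t k).
  by rewrite mulrA divfK // gt_eqF.
apply: ereal_sup_ubound; exists (R0 / t k) => //=.
by rewrite divr_gt0 //= ltr_pdivrMr // mulrC -ltr_pdivrMr // k0P.
Qed.

Lemma tangent_along (t : nat -> R) : (forall k, 0 < t k) -> diverging t ->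
  exists (phi : nat -> nat) (T : metricSpace R) (p : T),
    tangents x (existT _ T p) /\ pGH_rescaled_conv x (fun j => t (phi j)) p.
Proof.
move=> tpos tdiv; have [U [UU Uev]] := ultraFilterLemma (@eventually_filter).
have U_tail N : U [set k | (N <= k)%N] by apply: Uev; exists N.
have [phi [phi_ge conv]] :=
  tangent_subseq tpos U_tail (rescaled_balls_cover tpos tdiv).
exists phi, (ultralimit x tpos (U := U)), (ubase x tpos (U := U)).
by split=> //; exact: tangent_of_subseq.
Qed.

End CoveringHypothesis.
End Tangents.

Section CoveringTransfer.
Variables (R : realType) (X : metricSpace R) (x : X) (T : metricSpace R) (p : T).
Variable t : nat -> R.
Hypothesis tpos : forall k, 0 < t k.
Hypothesis conv : pGH_rescaled_conv x t p.
Local Notation d := (@md R X).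
Local Notation dT := (@md R T).

Lemma ncov_tangent_le_rescaled (lam rho e : R) :
  0 < lam -> 0 < e -> lam * (1 + 2 * e) + 2 * e < rho ->
  exists n0, forall n, (n0 <= n)%N ->
  (ncov dT rho (cball dT p 1) <=
   ncov d (lam * ((1 + 2 * e) / t n)) (cball d x ((1 + 2 * e) / t n)))%E.
Proof.
move=> lam0 e0 lre; set s := 1 + 2 * e in lre *; have sE : s = 1 + 2 * e by [].
have ls0 : 0 < lam * s by rewrite mulr_gt0 //; lra.
have Rd0 : 0 < 2 + s + lam * s by lra.
have [n0 n0P] := conv Rd0 e0; exists n0 => n /n0P [f [fx fdist fdense]].
have tn := tpos n; have tn' := ltW tn.
apply: ncov_le_of_covers => N c Xc; exists (f \o c) => y; rewrite /cball /= => py.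
have [a xa fay] := fdense y ltac:(lra).
have xx : t n * d x x < 2 + s + lam * s by rewrite mdxx mulr0.
have /ltr_normlP [g1 _] := fdist x a xx xa; rewrite fx in g1.
have := md_tri p y (f a); rewrite (md_sym y (f a)) => pfa.
have xa' : t n * d x a < s by lra.
have [|i ilt cia] := Xc a; first by rewrite /cball /= ler_pdivlMr // mulrC ltW.
exists i => //=; move: cia; rewrite mulrA ltr_pdivlMr // mulrC => cia.
have := scaled_md_tri x a (c i) tn'; rewrite (md_sym a (c i)) => xc.
have /ltr_normlP [_ g2] := fdist (c i) a ltac:(lra) xa.
by have := md_tri (f (c i)) (f a) y; lra.
Qed.

Lemma ncov_rescaled_le_tangent (rho e : R) : 0 < rho -> 0 < e -> e < 1 ->
  exists n0, forall n, (n0 <= n)%N ->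
  (ncov d ((rho + 2 * e) / t n) (cball d x ((1 - e) / t n)) <=
   ncov dT rho (cball dT p 1))%E.
Proof.
move=> rho0 e0 e1; have Rd0 : 0 < rho + 3 by lra.
have [n0 n0P] := conv Rd0 e0; exists n0 => n /n0P [f [fx fdist fdense]].
have tn := tpos n.
apply: ncov_le_of_covers => N c Tc.
pose near_c j a := t n * d x a < rho + 3 /\ dT (f a) (c j) < e.
have /choice [c' c'P] : forall j, exists a', (exists a, near_c j a) -> near_c j a'.
  move=> j; have [[a ja]|nj] := pselect (exists a, near_c j a); first by exists a.
  by exists x => /nj.
exists c' => a; rewrite /cball /= ler_pdivlMr // mulrC => xa.
have xx : t n * d x x < rho + 3 by rewrite mdxx mulr0.
have xa' : t n * d x a < rho + 3 by lra.
have /ltr_normlP [_ g1] := fdist x a xx xa'; rewrite fx in g1.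
have [|j jlt cfa] := Tc (f a); first by rewrite /cball /=; lra.
exists j => //.
have := md_tri p (f a) (c j); rewrite (md_sym (f a) (c j)) => pc.
have [a' xa'' fa'c] := fdense (c j) ltac:(lra).
have [xc' fc'] := c'P j (ex_intro _ a' (conj xa'' fa'c)).
have /ltr_normlP [g2 _] := fdist (c' j) a xc' xa'.
have := md_tri (f (c' j)) (c j) (f a).
by rewrite ltr_pdivlMr // mulrC; lra.
Qed.

End CoveringTransfer.

Section Halving.
Variable R : realType.

Definition logscale (l : R) := (ln l^-1)^-1.

Definition halving_ratio (r : R) := logscale r / logscale (r / 2).

Lemma logscale_gt0 (r : R) : 0 < r < 1 -> 0 < logscale r.
Proof. by case/andP => r0 r1; rewrite invr_gt0 ln_gt0 // invf_gt1. Qed.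

Lemma halving_ratio_gt0 (r : R) : 0 < r < 1 -> 0 < halving_ratio r.
Proof.
move=> /[dup] r01 /andP [r0 r1].
by rewrite divr_gt0 ?logscale_gt0 //; apply/andP; split; lra.
Qed.

Lemma halving_ratio_ge0 (r : R) : 0 < r < 1 -> (0 <= (halving_ratio r)%:E)%E.
Proof. by move=> r01; rewrite lee_fin ltW ?halving_ratio_gt0. Qed.

Lemma logratio_halving (n : \bar R) (r : R) : 0 < r < 1 ->
  logratio n r = ((halving_ratio r)%:E * logratio n (r / 2))%E.
Proof.
move=> /andP [r0 r1]; have : 0 < logscale (r / 2) by apply: logscale_gt0; lra.
by move=> /lt0r_neq0 h; rewrite /logratio muleCA -EFinM divfK.
Qed.

Lemma logratio_ge0 (n : \bar R) (l : R) : (1 <= n)%E -> 0 < l < 1 ->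
  (0 <= logratio n l)%E.
Proof. by move=> n1 l01; rewrite mule_ge0 ?elog_ge0 // lee_fin ltW ?logscale_gt0. Qed.

Lemma logratio_le (n1 n2 : \bar R) (l : R) : (1 <= n1)%E -> (n1 <= n2)%E -> 0 < l < 1 ->
  (logratio n1 l <= logratio n2 l)%E.
Proof.
move=> n11 n12 l01; apply: lee_wpmul2r; last exact: elog_le.
by rewrite lee_fin ltW ?logscale_gt0.
Qed.

(* [halving_ratio r = 1 + ln 2 / ln (1/r)] tends to [1] as [r] goes to [0]. *)
Lemma halving_ratio_le (eps : R) : 0 < eps -> exists2 del : R, 0 < del &
  forall r, 0 < r < del -> halving_ratio r <= 1 + eps.
Proof.
move=> eps0; have l2 : 0 < ln (2 : R) by rewrite ln_gt0 // ltr1n.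
exists (expR (- (ln 2 / eps))); first exact: expR_gt0.
move=> r /andP [r0 rdel].
have r1 : r < 1 by apply: lt_trans rdel _; rewrite expR_lt1 oppr_lt0 divr_gt0.
have lnr : ln 2 / eps < ln r^-1.
  rewrite lnV ?posrE // ltrNr -(expRK (- (ln 2 / eps))) ltr_ln ?posrE //.
  exact: expR_gt0.
have lnr0 : 0 < ln r^-1 by rewrite ln_gt0 // invf_gt1.
rewrite /halving_ratio /logscale invfM invrK lnM ?posrE ?invr_gt0 // invrK.
rewrite mulrC ler_pdivrMr //; move: lnr; rewrite ltr_pdivrMr //; lra.
Qed.

Lemma lee_of_mul1D (A B : \bar R) :
  (forall eps : R, 0 < eps -> (A <= (1 + eps)%:E * B)%E) -> (A <= B)%E.
Proof.
case: B => [b| |] AB; last 2 first.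
- by rewrite leey.
- by have := AB 1 ltr01; rewrite mulrNy gtr0_sg ?mul1e //; lra.
case: A AB => [a| |] AB; last 2 first.
- by have := AB 1 ltr01; rewrite -EFinM.
- by rewrite leNye.
rewrite lee_fin; apply/ler_addgt0Pr => e e0.
have nb1 : 0 < `|b| + 1 by rewrite ltr_pwDr.
have := AB (e / (`|b| + 1)) (divr_gt0 e0 nb1); rewrite -EFinM lee_fin.
have : e / (`|b| + 1) * b <= e.
  by rewrite mulrAC ler_pdivrMr // ler_pM2l //; have := ler_norm b; lra.
lra.
Qed.

Lemma lee_mul_ereal_inf (k : R) (A : set (\bar R)) (z : \bar R) : 0 < k ->
  (forall a, A a -> (z <= k%:E * a)%E) -> (z <= k%:E * ereal_inf A)%E.
Proof.
move=> k0 zA; rewrite -lee_pdivrMl //; apply: le_ereal_inf_tmp => a Aa.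
by rewrite lee_pdivrMl //; exact: zA.
Qed.

Section Comparison.
Variables (Q : R -> R) (F G : R -> \bar R).
Hypothesis Q_le : forall eps, 0 < eps -> exists2 del : R, 0 < del &
  forall r, 0 < r < del -> Q r <= 1 + eps.
Hypothesis FG : forall r, 0 < r < 1 -> (F r <= (Q r)%:E * G (r / 2))%E.
Hypothesis G_ge0 : forall r, 0 < r < 1 -> (0 <= G r)%E.

Lemma le_mul1D_halving (eps r : R) : 0 < eps -> 0 < r < 1 -> Q r <= 1 + eps ->
  (F r <= (1 + eps)%:E * G (r / 2))%E.
Proof.
move=> eps0 /[dup] r01 /andP [r0 r1] Qr; apply: le_trans (FG r01) _.
by apply: lee_wpmul2r; [apply: G_ge0; apply/andP; split; lra|rewrite lee_fin].
Qed.

Lemma limsup0_le_halving : (limsup0 F <= limsup0 G)%E.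
Proof.
apply: lee_of_mul1D => eps eps0; have [del del0 Qdel] := Q_le eps0.
have eps1 : (0 < (1 + eps)%:E)%E by rewrite lte_fin; lra.
apply: lee_mul_ereal_inf => [|_ [dl dl0 <-]]; first by rewrite -lte_fin.
pose d1 := Num.min (Num.min del 1) (2 * dl).
have d10 : 0 < d1 by rewrite !lt_min del0 ltr01 /= mulr_gt0.
apply: le_trans (ereal_inf_lbound _) _; first by exists d1.
apply: ge_ereal_sup => _ [r /andP [r0 +] <-].
rewrite !lt_min => /andP [/andP [rdel r1] r2].
apply: le_trans (le_mul1D_halving eps0 _ (Qdel r _)) _; rewrite ?r0 ?r1 ?rdel //.
rewrite lee_pmul2l //.
by apply: ereal_sup_ubound; exists (r / 2) => //=; apply/andP; split; lra.
Qed.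

Lemma liminf0_le_halving : (liminf0 F <= liminf0 G)%E.
Proof.
apply: lee_of_mul1D => eps eps0; have [del del0 Qdel] := Q_le eps0.
have eps1 : (0 < (1 + eps)%:E)%E by rewrite lte_fin; lra.
apply: ge_ereal_sup => _ [dl dl0 <-].
pose d1 := Num.min (Num.min del 1) dl.
have d10 : 0 < d1 by rewrite !lt_min del0 ltr01 dl0.
apply: (@le_trans _ _ (ereal_inf (F @` [set r | 0 < r < d1]))).
  apply: ereal_inf_le_tmp => _ [r /andP [r0 rd1] <-]; exists r => //.
  by move: rd1; rewrite /= r0 !lt_min => /andP [_ ->].
apply: le_trans (_ : (_ <= (1 + eps)%:E *
    ereal_inf (G @` [set r | (0 < r < d1 / 2)%R]))%E) _.
  apply: lee_mul_ereal_inf => [|_ [l /andP [l0 ld] <-]]; first by rewrite -lte_fin.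
  have l2 : 0 < 2 * l < d1 by apply/andP; split; lra.
  apply: le_trans (ereal_inf_lbound _) _; first by exists (2 * l).
  move: (l2) => /andP [_]; rewrite !lt_min => /andP [/andP [ldel l1] _].
  have l01 : 0 < 2 * l < 1 by rewrite mulr_gt0.
  have Ql : Q (2 * l) <= 1 + eps by apply: Qdel; rewrite mulr_gt0.
  by have := le_mul1D_halving eps0 l01 Ql; rewrite mulrC mulfK.
rewrite lee_pmul2l //.
by apply: ereal_sup_ubound; exists (d1 / 2) => //; rewrite /= divr_gt0.
Qed.

End Comparison.
End Halving.

Section TangentialDimensions.
Variables (R : realType) (X : metricSpace R) (x : X).
Hypothesis ncov_bounded : forall l : R, 0 < l ->
  (limsup0 (fun r => ncov (@md R X) (l * r) (cball (@md R X) x r)) < +oo)%E.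
Local Notation d := (@md R X).

Definition ball_logratio (l r : R) := logratio (ncov d (l * r) (cball d x r)) l.

Definition sup_tangent_logratio (r : R) :=
  ereal_sup [set tan_logratio Tp r | Tp in tangents x].

Definition inf_tangent_logratio (r : R) :=
  ereal_inf [set tan_logratio Tp r | Tp in tangents x].

Lemma ball_logratio_ge0 l r : 0 < l < 1 -> 0 < r -> (0 <= ball_logratio l r)%E.
Proof. by move=> l01 r0; rewrite logratio_ge0 // ncov_cball_ge1 // ltW. Qed.

Lemma tan_logratio_ge0 (Tp : {T : metricSpace R & T}) r : 0 < r < 1 ->
  (0 <= tan_logratio Tp r)%E.
Proof. by move=> r01; rewrite logratio_ge0 // ncov_cball_ge1. Qed.

Lemma tangent_exists : exists Tp, tangents x Tp.
Proof.
have [_ [T [p [Tp _]]]] :=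
  tangent_along ncov_bounded (fun k => ltr0Sn R k) (@diverging_natS R).
by exists (existT _ T p).
Qed.

Lemma limsup_ball_logratio_ge0 l : 0 < l < 1 -> (0 <= limsup0 (ball_logratio l))%E.
Proof.
move=> l01; apply: le_ereal_inf_tmp => _ [del del0 <-].
apply: le_trans (ball_logratio_ge0 l01 (_ : 0 < del / 2)) _; first by rewrite divr_gt0.
apply: ereal_sup_ubound; exists (del / 2) => //=.
by move: del0 => /= ?; apply/andP; split; lra.
Qed.

Lemma liminf_ball_logratio_ge0 l : 0 < l < 1 -> (0 <= liminf0 (ball_logratio l))%E.
Proof.
move=> l01.
apply: le_trans (_ : _ <= ereal_inf (ball_logratio l @` [set r | (0 < r < 1)%R]))%E _.
  by apply: le_ereal_inf_tmp => _ [r /andP [r0 _] <-]; exact: ball_logratio_ge0.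
by apply: ereal_sup_ubound; exists 1 => //=; rewrite ltr01.
Qed.

Lemma sup_tangent_logratio_ge0 r : 0 < r < 1 -> (0 <= sup_tangent_logratio r)%E.
Proof.
move=> r01; have [Tp xTp] := tangent_exists.
by apply: le_trans (tan_logratio_ge0 Tp r01) _; apply: ereal_sup_ubound; exists Tp.
Qed.

Lemma inf_tangent_logratio_ge0 r : 0 < r < 1 -> (0 <= inf_tangent_logratio r)%E.
Proof.
by move=> r01; apply: le_ereal_inf_tmp => _ [Tp _ <-]; exact: tan_logratio_ge0.
Qed.

Lemma tan_logratio_le_ball (T : metricSpace R) (p : T) (t : nat -> R) r :
  (forall k, 0 < t k) -> pGH_rescaled_conv x t p -> 0 < r < 1 ->
  exists n0, forall n, (n0 <= n)%N ->
  (tan_logratio (existT _ T p) r <=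
   (halving_ratio r)%:E * ball_logratio (r / 2) ((1 + 2 * (r / 8)) / t n))%E.
Proof.
move=> tpos conv /[dup] r01 /andP [r0 r1].
have [|||n0 n0P] :=
  ncov_tangent_le_rescaled tpos conv (lam := r / 2) (rho := r) (e := r / 8).
- by rewrite divr_gt0.
- by rewrite divr_gt0.
- by nra.
exists n0 => n /n0P ncovn; rewrite /ball_logratio -logratio_halving //.
by apply: logratio_le ncovn r01; exact: ncov_cball_ge1.
Qed.

Lemma ball_logratio_le_tan (T : metricSpace R) (p : T) (t : nat -> R) l :
  (forall k, 0 < t k) -> pGH_rescaled_conv x t p -> 0 < l < 1 ->
  exists n0, forall n, (n0 <= n)%N ->
  (ball_logratio l ((1 - l / 8) / t n) <=
   (halving_ratio l)%:E * tan_logratio (existT _ T p) (l / 2))%E.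
Proof.
move=> tpos conv /[dup] l01 /andP [l0 l1].
have [|||n0 n0P] :=
  ncov_rescaled_le_tangent tpos conv (rho := l / 2) (e := l / 8).
- by rewrite divr_gt0.
- by rewrite divr_gt0.
- by lra.
exists n0 => n /n0P ncovn; have tn := tpos n.
have rad : (l / 2 + 2 * (l / 8)) / t n <= l * ((1 - l / 8) / t n).
  by rewrite [l * (_ / _)]mulrA ler_pM2r ?invr_gt0 //; nra.
rewrite /tan_logratio /= -logratio_halving //.
apply: logratio_le (le_trans (ncov_radius_le _ _ rad) ncovn) l01.
by apply: ncov_cball_ge1; rewrite divr_ge0 //; lra.
Qed.

Lemma sup_tangent_logratio_le r : 0 < r < 1 ->
  (sup_tangent_logratio r <=
   (halving_ratio r)%:E * limsup0 (ball_logratio (r / 2)))%E.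
Proof.
move=> r01; apply: ge_ereal_sup => _ [[T p] [t [tpos [tdiv conv]]] <-].
have [n0 n0P] := tan_logratio_le_ball tpos conv r01.
apply: lee_mul_ereal_inf => [|_ [del del0 <-]]; first exact: halving_ratio_gt0.
have [|n n0n /andP [sn0 sndel]] :=
  diverging_small (c := 1 + 2 * (r / 8)) n0 tpos tdiv _ del0.
  by case/andP: r01 => r0 _; rewrite addr_gt0 // mulr_gt0 // divr_gt0.
apply: le_trans (n0P n n0n) (lee_wpmul2l (halving_ratio_ge0 r01) _).
by apply: ereal_sup_ubound; exists ((1 + 2 * (r / 8)) / t n) => //=; rewrite sn0.
Qed.

Lemma liminf_ball_logratio_le l : 0 < l < 1 ->
  (liminf0 (ball_logratio l) <=
   (halving_ratio l)%:E * inf_tangent_logratio (l / 2))%E.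
Proof.
move=> l01; apply: lee_mul_ereal_inf => [|_ [[T p] [t [tpos [tdiv conv]]] <-]].
  exact: halving_ratio_gt0.
have [n0 n0P] := ball_logratio_le_tan tpos conv l01.
apply: ge_ereal_sup => _ [del del0 <-].
have [|n n0n sn] := diverging_small (c := 1 - l / 8) n0 tpos tdiv _ del0.
  by case/andP: l01 => l0 l1; lra.
by apply: le_trans (ereal_inf_lbound _) (n0P n n0n); exists ((1 - l / 8) / t n).
Qed.

Lemma tangent_along_seq (c : R) (P : R -> Prop) : 0 < c ->
  (forall k : nat, exists s : R, 0 < s < k.+1%:R^-1 /\ P s) ->
  exists (T : metricSpace R) (p : T) (s : nat -> R),
  [/\ forall j, 0 < s j, forall j, P (s j), tangents x (existT _ T p)
    & pGH_rescaled_conv x (fun j => c / s j) p].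
Proof.
move=> c0 /choice [s sP]; have spos k : 0 < s k by case: (sP k) => /andP [].
have tpos k : 0 < c / s k by rewrite divr_gt0.
have [phi [T [p [xTp conv]]]] :=
  tangent_along ncov_bounded tpos (diverging_div c0 (fun k => (sP k).1)).
by exists T, p, (s \o phi); split=> [j|j||]; [exact: spos|case: (sP (phi j))|..].
Qed.

Lemma limsup_ball_logratio_le l : 0 < l < 1 ->
  (limsup0 (ball_logratio l) <=
   (halving_ratio l)%:E * sup_tangent_logratio (l / 2))%E.
Proof.
move=> /[dup] l01 /andP [l0 l1]; rewrite leNgt; apply/negP => lt_sup.
have c0 : 0 < 1 - l / 8 by lra.
have [|T [p [s [spos big xTp conv]]]] := tangent_along_seq
    (P := fun s => (halving_ratio l)%:E * sup_tangent_logratio (l / 2)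
                   < ball_logratio l s)%E c0.
  move=> k; have k0 : 0 < k.+1%:R^-1 :> R by rewrite invr_gt0.
  have /(lt_le_trans lt_sup) : (limsup0 (ball_logratio l) <=
      ereal_sup (ball_logratio l @` [set r | (0 < r < k.+1%:R^-1)%R]))%E.
    by apply: ereal_inf_lbound; exists k.+1%:R^-1.
  by case/ereal_sup_gt => _ [r r0k <-]; exists r.
have [n0 n0P] := ball_logratio_le_tan (fun j => divr_gt0 c0 (spos j)) conv l01.
have := n0P n0 (leqnn n0); rewrite invf_div mulrCA divff ?mulr1 ?gt_eqF // => le_tan.
have := big n0; apply/negP; rewrite -leNgt; apply: le_trans le_tan _.
apply: (lee_wpmul2l (halving_ratio_ge0 l01)).
by apply: ereal_sup_ubound; exists (existT _ T p).
Qed.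

Lemma inf_tangent_logratio_le r : 0 < r < 1 ->
  (inf_tangent_logratio r <=
   (halving_ratio r)%:E * liminf0 (ball_logratio (r / 2)))%E.
Proof.
move=> /[dup] r01 /andP [r0 r1]; rewrite leNgt; apply/negP => lt_inf.
have c0 : 0 < 1 + 2 * (r / 8) by lra.
have [|T [p [s [spos small xTp conv]]]] := tangent_along_seq
    (P := fun s => (halving_ratio r)%:E * ball_logratio (r / 2) s
                   < inf_tangent_logratio r)%E c0.
  move=> k; apply: contrapT => nk; move: lt_inf; apply/negP; rewrite -leNgt.
  apply: le_trans (_ : _ <= (halving_ratio r)%:E *
      ereal_inf (ball_logratio (r / 2) @` [set s | (0 < s < k.+1%:R^-1)%R]))%E _.
    apply: lee_mul_ereal_inf => [|_ [s sk <-]]; first exact: halving_ratio_gt0.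
    by rewrite leNgt; apply/negP => lt_s; apply: nk; exists s.
  apply: (lee_wpmul2l (halving_ratio_ge0 r01)).
  by apply: ereal_sup_ubound; exists k.+1%:R^-1 => //=; rewrite invr_gt0.
have [n0 n0P] := tan_logratio_le_ball (fun j => divr_gt0 c0 (spos j)) conv r01.
have := n0P n0 (leqnn n0); rewrite invf_div mulrCA divff ?mulr1 ?gt_eqF // => le_ball.
have := small n0; apply/negP; rewrite -leNgt; apply: le_trans le_ball.
by apply: ereal_inf_lbound; exists (existT _ T p).
Qed.

End TangentialDimensions.

Theorem theorem3p4 (R : realType) (X : metricSpace R) (x : X) :
  (forall l : R, 0 < l ->
     (limsup0 (fun r => ncov (@md R X) (l * r) (cball (@md R X) x r))
        < +oo)%E) ->
  upper_tan_dim x =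
    limsup0 (fun r => ereal_sup [set tan_logratio Tp r | Tp in tangents x]) /\
  lower_tan_dim x =
    liminf0 (fun r => ereal_inf [set tan_logratio Tp r | Tp in tangents x]).
Proof.
move=> ncov_bounded; have Q_le := @halving_ratio_le R.
split; apply/le_anti/andP; split.
- apply: (limsup0_le_halving Q_le (limsup_ball_logratio_le ncov_bounded)).
  exact: sup_tangent_logratio_ge0.
- apply: (limsup0_le_halving Q_le (sup_tangent_logratio_le x)).
  exact: limsup_ball_logratio_ge0.
- apply: (liminf0_le_halving Q_le (liminf_ball_logratio_le x)).
  exact: inf_tangent_logratio_ge0.
- apply: (liminf0_le_halving Q_le (inf_tangent_logratio_le ncov_bounded)).
  exact: liminf_ball_logratio_ge0.
Qed.
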